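(* Let $\mathcal{M}$ be a matroid on $[n]$, $J=J(\mathcal{M})$, and let $v$ be a vertex with $\{v\}$ independent in $\mathcal{M}$. Let $N\in G(J)$ with $x_v\mid N$. For every $\ell\ge1$ and every $L\in G\big(SF_\ell(J(\mathcal{M}/v):N)\big)$, we have $LN\in G(SF_{\ell+1}(J))$.
   Context: $R=\mathbb{K}[x_1,\ldots,x_n]$, $\mathbb{K}$ a field. For a matroid $\mathcal{N}$ on $E\subseteq[n]$, $J(\mathcal{N})=\bigcap_{F\in\mathcal{B}(\mathcal{N})}(x_i:i\in F)$, formed in $\mathbb{K}[x_i:i\in E]$ and extended to $R$. $\mathcal{M}/v$ is the contraction by $\{v\}$. $G(\cdot)$ denotes minimal monomial generators. For a squarefree monomial ideal $I$ with minimal primes $\mathfrak q_j$, $I^{(\ell)}=\bigcap\mathfrak q_j^\ell$ and $SF_\ell(I)$ is the ideal generated by the squarefree monomials in $I^{(\ell)}$. *)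

(* Monomial ideals of R = K[x_0,...,x_{n-1}] are modelled by
   the set of monomials they contain (a monomial ideal is determined by its
   monomials; the field K plays no role). *)
From mathcomp Require Import all_boot.
Set Implicit Arguments. Unset Strict Implicit. Unset Printing Implicit Defensive.

Definition is_matroid (n : nat) (B : {set {set 'I_n}}) : Prop :=
  B != set0 /\
  forall B1 B2, B1 \in B -> B2 \in B -> forall x, x \in B1 :\: B2 ->
    exists2 y, y \in B2 :\: B1 & (B1 :\ x) :|: [set y] \in B.

Definition indep (n : nat) (B : {set {set 'I_n}}) (I : {set 'I_n}) : Prop :=
  exists2 F, F \in B & I \subset F.

(* Contraction M/v (for {v} independent): bases are F \ {v}, F basis, v in F.
   Its ground set is [n] \ {v}. *)
Definition contract (n : nat) (B : {set {set 'I_n}}) (v : 'I_n) : {set {set 'I_n}} :=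
  [set F :\ v | F in B & v \in F].

Definition mono (n : nat) := {ffun 'I_n -> nat}.

Definition mmul (n : nat) (a b : mono n) : mono n := [ffun i => a i + b i].
Definition mdvd (n : nat) (a b : mono n) : Prop := forall i, a i <= b i.
Definition sqfree (n : nat) (a : mono n) : Prop := forall i, a i <= 1.

Definition mideal (n : nat) := mono n -> Prop.

Definition mingen (n : nat) (I : mideal n) (m : mono n) : Prop :=
  I m /\ forall m', I m' -> mdvd m' m -> m' = m.

Definition in_prime (n : nat) (S : {set 'I_n}) (m : mono n) : Prop :=
  exists2 i, i \in S & 0 < m i.

Definition in_prime_pow (n : nat) (S : {set 'I_n}) (l : nat) (m : mono n) : Prop :=
  l <= \sum_(i in S) m i.

Definition Jideal (n : nat) (B : {set {set 'I_n}}) : mideal n :=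
  fun m => forall F, F \in B -> in_prime F m.

Definition colon (n : nat) (I : mideal n) (N : mono n) : mideal n :=
  fun m => I (mmul m N).

Definition contains_ideal (n : nat) (S : {set 'I_n}) (I : mideal n) : Prop :=
  forall m, I m -> in_prime S m.
Definition minprime (n : nat) (I : mideal n) (S : {set 'I_n}) : Prop :=
  contains_ideal S I /\ forall S' : {set 'I_n}, S' \subset S -> contains_ideal S' I -> S' = S.

Definition sympow (n : nat) (I : mideal n) (l : nat) : mideal n :=
  fun m => forall S, minprime I S -> in_prime_pow S l m.

Definition SF (n : nat) (l : nat) (I : mideal n) : mideal n :=
  fun m => exists s, [/\ sqfree s, sympow I l s & mdvd s m].

From mathcomp Require Import all_boot zify.
From Stdlib Require Import Classical FunctionalExtensionality PropExtensionality.
Set Implicit Arguments. Unset Strict Implicit. Unset Printing Implicit Defensive.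

(* For a clutter C, w is a minimal generator of SF_l(J(C)) iff w is
   squarefree, has weight at least l on every member of C, and every variable
   of w lies on a member of weight exactly l.  The colon J(M/v) : N is J of the
   clutter C_v of the sets F \ v, F a basis through v meeting supp N only in v.
   By minimality of N, every variable c of N has a private basis, meeting
   supp N only in c.  For w = LN, exchanging the elements of supp N \ v of a
   basis one at a time into the private basis of v does not increase its
   weight and ends at a basis F with F \ v in C_v, whence weight >= l + 1.  A
   variable of L lies on the basis F' + v, and a variable i of N on the basis
   F' + i (one exchange into the private basis of i), for some member F' of
   C_v of weight l. *)

Lemma leq_sum_subset (T : finType) (A A' : {set T}) (f : T -> nat) :
  A \subset A' -> \sum_(i in A) f i <= \sum_(i in A') f i.
Proof. by move=> AA'; rewrite [X in _ <= X](big_setID A) (setIidPr AA') leq_addr. Qed.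

Lemma leq_sum_setU1 (T : finType) (a : T) (A : {set T}) (f : T -> nat) :
  \sum_(i in a |: A) f i <= f a + \sum_(i in A) f i.
Proof.
rewrite (big_setD1 a (setU11 a A)) leq_add2l leq_sum_subset //.
by apply/subsetP => i; rewrite !inE => /andP [/negbTE ->].
Qed.

Section ClutterIdeals.

Variable n : nat.
Implicit Types (C : {set {set 'I_n}}) (F S : {set 'I_n}) (m w N : mono n).

Definition supp m : {set 'I_n} := [set i | 0 < m i].

Definition clutter C :=
  forall F1 F2, F1 \in C -> F2 \in C -> F1 \subset F2 -> F1 = F2.

Definition avoiding C N : {set {set 'I_n}} := [set F in C | [disjoint F & supp N]].

Lemma clutter_avoiding C N : clutter C -> clutter (avoiding C N).
Proof. by move=> hC F1 F2; rewrite !inE => /andP [F1C _] /andP [F2C _]; apply: hC. Qed.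

Lemma clutter_contract C v : clutter C -> clutter (contract C v).
Proof.
move=> hC _ _ /imsetP [F1 + ->] /imsetP [F2 + ->].
rewrite !inE => /andP [F1C vF1] /andP [F2C vF2] F12; congr (_ :\ v); apply: hC => //.
apply/subsetP => i iF1; have [-> // | iv] := eqVneq i v.
have : i \in F1 :\ v by rewrite !inE iv iF1.
by move/(subsetP F12); rewrite !inE => /andP [].
Qed.

Lemma colon_Jideal C N : colon (Jideal C) N = Jideal (avoiding C N).
Proof.
apply: functional_extensionality => m; apply: propositional_extensionality.
split=> [mNJ F | mJ F FC].
- rewrite inE => /andP [FC FN]; have [i iF] := mNJ F FC.
  rewrite ffunE addn_gt0 => /orP [mi | Ni]; first by exists i.
  by move: (disjointFr FN iF); rewrite inE Ni.
- have [FN | ] := boolP [disjoint F & supp N].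
    have [|i iF mi] := mJ F; first by rewrite inE FC FN.
    by exists i; rewrite // ffunE ltn_addr.
  rewrite -setI_eq0 => /set0Pn [i]; rewrite !inE => /andP [iF Ni].
  by exists i; rewrite // ffunE ltn_addl.
Qed.

Lemma Jideal_contains_member C S :
  contains_ideal S (Jideal C) -> exists2 F, F \in C & F \subset S.
Proof.
move=> SJ; apply: NNPP => noF.
pose m : mono n := [ffun i => nat_of_bool (i \notin S)].
have [|i iS] := SJ m; last by rewrite ffunE iS.
move=> F FC; have /subsetPn [i iF iS] : ~~ (F \subset S).
  by apply/negP => FS; apply: noF; exists F.
by exists i; rewrite // ffunE iS.
Qed.

Lemma minprime_Jideal C F : clutter C -> F \in C -> minprime (Jideal C) F.
Proof.
move=> hC FC; split=> [m mJ | S SF SJ]; first exact: mJ.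
have [F' F'C F'S] := Jideal_contains_member SJ.
have F'F := hC _ _ F'C FC (subset_trans F'S SF).
by apply/eqP; rewrite eqEsubset SF -F'F F'S.
Qed.

Lemma sympow_JidealP C l m : clutter C ->
  sympow (Jideal C) l m <-> forall F, F \in C -> l <= \sum_(i in F) m i.
Proof.
move=> hC; split=> [mS F FC | mC S [SJ _]]; first exact/mS/minprime_Jideal.
have [F FC FS] := Jideal_contains_member SJ.
exact: leq_trans (mC F FC) (leq_sum_subset _ FS).
Qed.

Lemma mingen_SF_JidealP C l w : clutter C ->
  mingen (SF l (Jideal C)) w <->
  [/\ sqfree w, forall F, F \in C -> l <= \sum_(i in F) w i
    & forall i, 0 < w i -> exists2 F, F \in C & i \in F /\ \sum_(j in F) w j <= l].
Proof.
move=> hC; split=> [[[s [s_sq s_sym sw]] w_min] | [w_sq w_ge w_tight]].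
- have s_w : s = w by apply: w_min sw; exists s; split=> // i.
  subst s; have w_ge := (sympow_JidealP _ _ hC).1 s_sym; split=> // i wi.
  apply: NNPP => no_tight.
  have {}no_tight F : F \in C -> i \in F -> l < \sum_(j in F) w j.
    by move=> FC iF; rewrite ltnNge; apply/negP => Fl; apply: no_tight; exists F.
  pose w' : mono n := [ffun j => if j == i then 0 else w j].
  have w'w : mdvd w' w by move=> j; rewrite ffunE; case: ifP.
  suff /w_min /(_ w'w) /ffunP /(_ i) : SF l (Jideal C) w'.
    by rewrite ffunE eqxx => w0; rewrite -w0 in wi.
  exists w'; split=> //; first by move=> j; exact: leq_trans (w'w j) (s_sq j).
  apply/(sympow_JidealP _ _ hC) => F FC.
  have w'E (A : {set 'I_n}) : i \notin A -> \sum_(j in A) w' j = \sum_(j in A) w j.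
    move=> iA; apply: eq_bigr => j jA; rewrite ffunE.
    by case: eqP => // ji; rewrite -ji jA in iA.
  have [iF | iF] := boolP (i \in F); last by rewrite w'E ?w_ge.
  have := no_tight F FC iF; have := s_sq i.
  rewrite !(big_setD1 i iF) /= w'E ?setD11 // ffunE eqxx.
  (* [set] merges differently elaborated copies of the sum, which [lia] would
     treat as distinct atoms. *)
  set S := \sum_(j in F :\ i) w j; lia.
- split=> [| m' [s [s_sq s_sym sm']] m'w].
    by exists w; split=> //; apply/(sympow_JidealP _ _ hC).
  have s_ge := (sympow_JidealP _ _ hC).1 s_sym.
  have ws : mdvd w s.
    move=> i; have [-> // | wi] := posnP (w i).
    have [F FC [iF wF]] := w_tight i wi.
    have sw : \sum_(j in F :\ i) s j <= \sum_(j in F :\ i) w j.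
      by apply: leq_sum => j _; exact: leq_trans (sm' j) (m'w j).
    have := s_ge F FC; move: wF sw; rewrite !(big_setD1 i iF) /=.
    set Sw := \sum_(j in F :\ i) w j; set Ss := \sum_(j in F :\ i) s j; lia.
  by apply/ffunP => i; apply/eqP; rewrite eqn_leq m'w (leq_trans (ws i) (sm' i)).
Qed.

Lemma mingen_Jideal_sqfree C N : mingen (Jideal C) N -> sqfree N.
Proof.
move=> [NJ N_min] i; pose N' : mono n := [ffun j => minn (N j) 1].
have <- : N' = N; last by rewrite ffunE geq_minr.
apply: N_min => [F FC | j]; last by rewrite ffunE geq_minl.
by have [j jF Nj] := NJ F FC; exists j; rewrite // ffunE leq_min Nj.
Qed.

Lemma mingen_Jideal_private C N c : mingen (Jideal C) N -> 0 < N c ->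
  exists2 F, F \in C & [disjoint F & supp N :\ c].
Proof.
move=> [NJ N_min] Nc; apply: NNPP => no_private.
pose N' : mono n := [ffun j => if j == c then 0 else N j].
suff /ffunP /(_ c) : N' = N by rewrite ffunE eqxx => N0; rewrite -N0 in Nc.
apply: N_min => [F FC | j]; last by rewrite ffunE; case: ifP.
have : ~~ [disjoint F & supp N :\ c] by apply/negP => Fc; apply: no_private; exists F.
rewrite -setI_eq0 => /set0Pn [j]; rewrite !inE => /and3P [jF jc Nj].
by exists j; rewrite // ffunE (negbTE jc).
Qed.

Lemma mem_private_basis C N c F :
  Jideal C N -> F \in C -> [disjoint F & supp N :\ c] -> c \in F.
Proof.
move=> NJ FC Fc; have [j jF Nj] := NJ F FC.
have [<- // | jc] := eqVneq j c.
by move: (disjointFr Fc jF); rewrite !inE jc Nj.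
Qed.

End ClutterIdeals.

Section Matroid.

Variables (n : nat) (B : {set {set 'I_n}}).
Hypothesis hM : is_matroid B.

Lemma matroid_clutter : clutter B.
Proof.
move=> F1 F2 F1B F2B F12; apply/eqP; rewrite eqEsubset F12 /=.
apply/subsetP => x xF2; apply: contraT => xF1.
have [|y] := hM.2 F2 F1 F2B F1B x; first by rewrite inE xF1 xF2.
by rewrite inE => /andP [/negP yF2 /(subsetP F12)].
Qed.

(* The exchanged-in element y lies in F0, hence outside P, and costs at most
   1 <= w x. *)
Lemma basis_exchange_descent (P F0 : {set 'I_n}) (w : mono n) :
  F0 \in B -> [disjoint F0 & P] -> sqfree w -> (forall i, i \in P -> 0 < w i) ->
  forall F, F \in B ->
  exists2 F', F' \in B & [disjoint F' & P] /\ \sum_(i in F') w i <= \sum_(i in F) w i.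
Proof.
move=> F0B F0P w_sq wP F; have [k] := ubnP #|F :&: P|.
elim: k => // k IH in F * => FPk FB.
have [FP | /set0Pn [x]] := eqVneq (F :&: P) set0.
  by exists F => //; rewrite -setI_eq0 FP.
rewrite inE => /andP [xF xP]; have xF0 := disjointFl F0P xP.
have [|y /setDP [yF0 yF]] := hM.2 F F0 FB F0B x; first by rewrite inE xF0 xF.
rewrite setUC => F'B; have yP := disjointFr F0P yF0.
have F'P : (y |: F :\ x) :&: P \subset (F :&: P) :\ x.
  apply/subsetP => z; rewrite !inE.
  by case: eqP => [-> | _] /=; rewrite ?yP ?andbF // andbA.
have [|F'' F''B [F''P F''F']] := IH _ _ F'B.
  rewrite ltnS in FPk; apply: leq_trans _ FPk.
  rewrite (cardsD1 x (F :&: P)) inE xF xP add1n ltnS.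
  exact: subset_leq_card F'P.
exists F'' => //; split=> //; apply: leq_trans F''F' _.
rewrite big_setU1 /= ?(big_setD1 x xF) ?leq_add2r; last by rewrite !inE (negbTE yF) andbF.
exact: leq_trans (w_sq y) (wP x xP).
Qed.

End Matroid.

Section ContractionColon.

Variables (n : nat) (B : {set {set 'I_n}}) (v : 'I_n) (N : mono n).
Hypotheses (hM : is_matroid B) (hN : mingen (Jideal B) N) (hvN : 0 < N v).

Local Notation C := (avoiding (contract B v) N).

Lemma contract_avoiding_mem F :
  F \in B -> [disjoint F & supp N :\ v] -> F :\ v \in C.
Proof.
move=> FB FN; have vF := mem_private_basis hN.1 FB FN.
rewrite inE; apply/andP; split; first by apply: imset_f; rewrite inE FB vF.
by rewrite -setI_eq0 setIDAC -setIDA setI_eq0.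
Qed.

Lemma avoiding_contract_setU1 F' i : F' \in C -> 0 < N i -> i |: F' \in B.
Proof.
rewrite inE => /andP [/imsetP [F + ->] F'N] Ni; rewrite inE => /andP [FB vF].
have [<- | vi] := eqVneq v i; first by rewrite setD1K.
have [Fi FiB Fi_priv] := mingen_Jideal_private hN Ni.
have vFi : v \notin Fi by rewrite (disjointFl Fi_priv) // !inE vi hvN.
have [|y /setDP [yFi _]] := hM.2 F Fi FB FiB v; first by rewrite inE vFi vF.
rewrite setUC => yFB; suff <- : y = i by [].
have [j] := hN.1 _ yFB; rewrite in_setU1 => /orP [/eqP -> | jF] Nj.
  apply/eqP; apply: contraTT yFi => yi.
  by rewrite (disjointFl Fi_priv) // !inE yi Nj.
by move: (disjointFr F'N jF); rewrite inE Nj.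
Qed.

Variables (l : nat) (L : mono n).
Hypotheses (hl : 0 < l) (L_sq : sqfree L)
  (L_ge : forall F', F' \in C -> l <= \sum_(i in F') L i)
  (L_tight : forall i, 0 < L i ->
     exists2 F', F' \in C & i \in F' /\ \sum_(j in F') L j <= l).

Lemma N_eq0_of_L_gt0 i : 0 < L i -> N i = 0.
Proof.
move=> Li; have [F' + [iF' _]] := L_tight Li.
by rewrite inE => /andP [_ /disjointFr /(_ iF')]; rewrite inE lt0n => /negbFE /eqP.
Qed.

Lemma sqfree_mmul : sqfree (mmul L N).
Proof.
move=> i; rewrite ffunE; have [-> | /N_eq0_of_L_gt0 ->] := posnP (L i).
  exact: mingen_Jideal_sqfree hN i.
by rewrite addn0 L_sq.
Qed.

Lemma sum_mmul_avoiding F' :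
  F' \in C -> \sum_(i in F') mmul L N i = \sum_(i in F') L i.
Proof.
rewrite inE => /andP [_ F'N]; apply: eq_bigr => i iF'; rewrite ffunE.
by move: (disjointFr F'N iF'); rewrite inE lt0n => /negbFE /eqP ->; rewrite addn0.
Qed.

Lemma basis_sum_mmul_ge F : F \in B -> l.+1 <= \sum_(i in F) mmul L N i.
Proof.
move=> FB; have [Fv FvB Fv_priv] := mingen_Jideal_private hN hvN.
have w_pos i : i \in supp N :\ v -> 0 < mmul L N i.
  by rewrite !inE ffunE => /andP [_ Ni]; exact: ltn_addl.
have [F' F'B [F'P F'F]] := basis_exchange_descent hM FvB Fv_priv sqfree_mmul w_pos FB.
apply: leq_trans F'F; have F'C := contract_avoiding_mem F'B F'P.
rewrite (big_setD1 v (mem_private_basis hN.1 F'B F'P)) /= sum_mmul_avoiding // ffunE.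
exact: leq_add (ltn_addl _ hvN) (L_ge F'C).
Qed.

Lemma exists_tight_avoiding : exists2 F', F' \in C & \sum_(i in F') L i <= l.
Proof.
have [Fv FvB Fv_priv] := mingen_Jideal_private hN hvN.
have FvC := contract_avoiding_mem FvB Fv_priv.
have : \sum_(i in Fv :\ v) L i != 0 by rewrite -lt0n (leq_trans hl (L_ge FvC)).
rewrite sum_nat_eq0 negb_forall => /existsP [x]; rewrite negb_imply -lt0n => /andP [_ Lx].
by have [F' F'C [_ F'l]] := L_tight Lx; exists F'.
Qed.

Lemma sum_mmul_setU1 F' j :
  F' \in C -> \sum_(i in F') L i <= l -> \sum_(i in j |: F') mmul L N i <= l.+1.
Proof.
move=> F'C F'l; apply: leq_trans (leq_sum_setU1 _ _ _) _.
by rewrite sum_mmul_avoiding // -add1n leq_add ?sqfree_mmul.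
Qed.

Lemma mmul_tight i : 0 < mmul L N i ->
  exists2 F, F \in B & i \in F /\ \sum_(j in F) mmul L N j <= l.+1.
Proof.
rewrite ffunE addn_gt0 => /orP [Li | Ni].
- have [F' F'C [iF' F'l]] := L_tight Li.
  exists (v |: F'); first exact: avoiding_contract_setU1.
  by rewrite setU1r // sum_mmul_setU1.
- have [F' F'C F'l] := exists_tight_avoiding.
  exists (i |: F'); first exact: avoiding_contract_setU1.
  by rewrite setU11 sum_mmul_setU1.
Qed.

End ContractionColon.

Theorem corollary4p15 (n : nat) (B : {set {set 'I_n}}) (hM : is_matroid B)
  (v : 'I_n) (hv : indep B [set v])
  (N : mono n) (hN : mingen (Jideal B) N) (hvN : 0 < N v)
  (l : nat) (hl : 1 <= l)
  (L : mono n) (hL : mingen (SF l (colon (Jideal (contract B v)) N)) L) :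
  mingen (SF l.+1 (Jideal B)) (mmul L N).
Proof.
have hB := matroid_clutter hM.
have hC : clutter (avoiding (contract B v) N) by exact/clutter_avoiding/clutter_contract.
move: hL; rewrite colon_Jideal (mingen_SF_JidealP _ _ hC) => -[L_sq L_ge L_tight].
apply/(mingen_SF_JidealP _ _ hB); split.
- exact: (sqfree_mmul hN L_sq L_tight).
- exact: (basis_sum_mmul_ge hM hN hvN L_sq L_ge L_tight).
- exact: (mmul_tight hM hN hvN hl L_sq L_ge L_tight).
Qed.
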